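(* Let $G\ge1$ and, for each group $v\in\{1,\ldots,G\}$, let $X_{v1},\ldots,X_{vN_v}\in L^2[0,1]$ be observed functions (assumed mean zero). Fix a number of layers $D\ge1$ and, for each layer $d=1,\ldots,D$, a partition of $\{1,\ldots,G\}$ into disjoint communities $\mathcal{K}_{d1},\mathcal{K}_{d2},\ldots$, such that the partitions are nested: every community of layer $d$ is contained in some community of layer $d-1$ ($d\ge2$). Write $c_{v,d}$ for the index $i$ of the community $\mathcal{K}_{di}$ containing $v$. Fix weights $f_v^{(d-1)}>0$. Define recursively, for $d=1,\ldots,D$: $R^{(0)}_{vn}=X_{vn}$; $$\widehat\Gamma^{(d-1)}_v(\cdot)=\frac1{N_v}\sum_{n=1}^{N_v}\langle R^{(d-1)}_{vn},\cdot\rangle R^{(d-1)}_{vn};$$ for each community $\mathcal{K}_{di}$, let $\hat\psi_{di}$ be a unit-norm eigenfunction of $\sum_{v\in\mathcal{K}_{di}}f^{(d-1)}_v\widehat\Gamma^{(d-1)}_v$ associated with its largest eigenvalue, assumed strictly positive (equivalently, $\hat\psi_{di}$ maximizes $\sum_{v\in\mathcal{K}_{di}}\sum_{n=1}^{N_v}N_v^{-1}f_v^{(d-1)}\langle R^{(d-1)}_{vn},\phi\rangle^2$ over $\|\phi\|=1$); set $\hat\phi_d^{(c_{v,d})}=\hat\psi_{di}$ for $v\in\mathcal{K}_{di}$; and set $$R^{(d)}_{vn}=X_{vn}-\sum_{j=1}^{d}\langle X_{vn},\hat\phi_j^{(c_{v,j})}\rangle\hat\phi_j^{(c_{v,j})}.$$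 Then for every group $v$, the functions $\hat\phi_1^{(c_{v,1})},\ldots,\hat\phi_D^{(c_{v,D})}$ are orthonormal in $L^2[0,1]$, i.e. $\langle\hat\phi_d^{(c_{v,d})},\hat\phi_{d'}^{(c_{v,d'})}\rangle=0$ for $d\neq d'$ and $\|\hat\phi_d^{(c_{v,d})}\|=1$.
   Context: $L^2[0,1]$ is equipped with the inner product $\langle x,y\rangle=\int_0^1 x(t)y(t)\,dt$ and norm $\|x\|^2=\langle x,x\rangle$. A ''community'' is a set of groups that share one common filtrated functional principal component in a given layer; the communities of each layer form a partition of the groups, and the partitions across layers form a tree (nested) structure. *)

From HB Require Import structures.
From mathcomp Require Import all_boot all_order all_algebra.
From mathcomp Require Import all_classical all_reals all_analysis.
Set Implicit Arguments. Unset Strict Implicit. Unset Printing Implicit Defensive.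
Import Order.TTheory GRing.Theory Num.Theory.
Local Open Scope classical_set_scope.
Local Open Scope ring_scope.

Section L2.
Variable R : realType.

Definition I01 : set R := `[0%R, 1%R].

Definition ip (x y : R -> R) : R :=
  Rintegral (@lebesgue_measure R) I01 (fun t => x t * y t).

Definition inL2 (x : R -> R) : Prop :=
  measurable_fun I01 x /\
  (@lebesgue_measure R).-integrable I01 (fun t => (x t ^+ 2)%:E).

(* equality in L^2[0,1] (i.e. almost everywhere on [0,1]) *)
Definition L2eq (x y : R -> R) : Prop := ip (x \- y) (x \- y) = 0.

Definition top_eigfun (op : (R -> R) -> (R -> R)) (psi : R -> R) : Prop :=
  inL2 psi /\ ip psi psi = 1 /\
  exists lam : R, 0 < lam /\ L2eq (op psi) (fun t => lam * psi t) /\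
    (forall (mu : R) (g : R -> R), inL2 g -> ip g g != 0 ->
        L2eq (op g) (fun t => mu * g t) -> mu <= lam).

(* Communities: c d v = index of the community of layer d containing v.
   phi d i = \hat\psi_{di} (layers d = 1..D). *)
Definition resid (G : nat) (N : 'I_G -> nat) (X : forall v : 'I_G, 'I_(N v) -> R -> R)
  (c : nat -> 'I_G -> nat) (phi : nat -> nat -> R -> R)
  (d : nat) (v : 'I_G) (n : 'I_(N v)) : R -> R :=
  fun t => X v n t - \sum_(j < d) ip (X v n) (phi j.+1 (c j.+1 v)) * phi j.+1 (c j.+1 v) t.

Definition Gam (G : nat) (N : 'I_G -> nat) (X : forall v : 'I_G, 'I_(N v) -> R -> R)
  (c : nat -> 'I_G -> nat) (phi : nat -> nat -> R -> R)
  (d : nat) (v : 'I_G) (g : R -> R) : R -> R :=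
  fun t => (N v)%:R^-1 *
    \sum_(n < N v) ip (resid X c phi d n) g * resid X c phi d n t.

Definition commOp (G : nat) (N : 'I_G -> nat) (X : forall v : 'I_G, 'I_(N v) -> R -> R)
  (c : nat -> 'I_G -> nat) (phi : nat -> nat -> R -> R) (f : nat -> 'I_G -> R)
  (d i : nat) (g : R -> R) : R -> R :=
  fun t => \sum_(v : 'I_G | c d v == i) f d.-1 v * Gam X c phi d.-1 v g t.

End L2.

From HB Require Import structures.
From mathcomp Require Import all_boot all_order all_algebra.
From mathcomp Require Import all_classical all_reals all_analysis.
From mathcomp Require Import ring lra zify.
Import Order.TTheory GRing.Theory Num.Theory.
Local Open Scope ring_scope.

(* Write chain u j = phi_{j+1}^{(c_{u,j+1})} for the component of layer j+1
   seen by group u.  The proof is an induction on the number k of layers.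
   Suppose chain u 0, ..., chain u (k-1) are orthonormal for every group u,
   and let u lie in a community K of layer k+1.  By nestedness every w in K
   shares the first k components of u, so each residual R^{(k)}_{wn} is the
   residual of the orthogonal projection onto their span and is orthogonal
   to each of them.  The community operator maps everything into the span of
   these residuals, so its range is orthogonal to chain u j (j < k); since
   chain u k is an eigenfunction of it with nonzero eigenvalue, chain u k is
   orthogonal to chain u j as well, while ||chain u k|| = 1 by definition. *)

Section InnerProduct.
Context {R : realType}.
Local Notation mu := (@lebesgue_measure R).
Local Notation L := (@inL2 R).
Local Notation I := (@I01 R).
Implicit Types x y z g h : R -> R.

Lemma measurable_I01 : measurable (I : set (measurableTypeR R)).
Proof. exact: measurable_itv. Qed.

(* |ab| <= a^2 + b^2: the product of two L^2 functions is integrable, so the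
   inner product is a genuine Lebesgue integral. *)
Lemma inL2_integrable_mul {x y} : L x -> L y ->
  mu.-integrable I (EFin \o (fun t => x t * y t)).
Proof.
move=> [mx ix] [my iy].
have bound (a b : R) : `|a * b| <= `|a ^+ 2 + b ^+ 2|.
  rewrite [`|_ + _|]ger0_norm ?addr_ge0 ?sqr_ge0 // normrM.
  have := sqr_ge0 (`|a| - `|b|); rewrite sqrrB !real_normK ?num_real //.
  have := normr_ge0 a; have := normr_ge0 b; nra.
apply: (le_integrable measurable_I01 _ _ (integrableD measurable_I01 ix iy)).
- exact/measurable_realfun.measurable_EFinP/measurable_realfun.measurable_funM.
- by move=> t _ /=; rewrite lee_fin; exact: bound.
Qed.

(* L^2 is closed under sums: (a+b)^2 <= 2a^2 + 2b^2. *)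
Lemma inL2D {x y} : L x -> L y -> L (fun t => x t + y t).
Proof.
move=> [mx ix] [my iy]; split; first exact: measurable_realfun.measurable_funD.
have bound (a b : R) : `|(a + b) ^+ 2| <= `|2 * a ^+ 2 + 2 * b ^+ 2|.
  rewrite (ger0_norm (sqr_ge0 _)) ger0_norm; last first.
    by apply: addr_ge0; apply: mulr_ge0 => //; exact: sqr_ge0.
  have := sqr_ge0 (a - b); rewrite !expr2; nra.
have i2 := integrableD measurable_I01 (integrableZl measurable_I01 2 ix)
  (integrableZl measurable_I01 2 iy).
apply: (le_integrable measurable_I01 _ _ i2).
- apply/measurable_realfun.measurable_EFinP/measurable_realfun.measurable_funX.
  exact: measurable_realfun.measurable_funD.
- by move=> t _ /=; rewrite lee_fin; exact: bound.
Qed.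

Lemma inL2Z k {x} : L x -> L (fun t => k * x t).
Proof.
move=> [mx ix]; split.
  exact: (measurable_realfun.measurable_funM (measurable_cst k) mx).
apply: (eq_integrable measurable_I01 _ _ _ (integrableZl measurable_I01 (k ^+ 2) ix)).
by move=> t _ /=; rewrite -EFinM exprMn.
Qed.

Lemma inL2B {x y} : L x -> L y -> L (fun t => x t - y t).
Proof.
move=> Lx Ly; have -> : (fun t => x t - y t) = (fun t => x t + (-1) * y t).
  by apply/funext => t; rewrite mulN1r.
exact/inL2D/inL2Z.
Qed.

Lemma inL2_0 : L (fun _ => 0).
Proof.
split; first exact: measurable_cst.
apply: (eq_integrable measurable_I01 _ _ _ (integrable0 _ _)).
by move=> t _ /=; rewrite expr0n.
Qed.

Lemma fun_big_nil (J : Type) (P : pred J) (F : J -> R -> R) :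
  (fun t => \sum_(j <- [::] | P j) F j t) = (fun _ => 0).
Proof. by apply/funext => t; rewrite big_nil. Qed.

Lemma fun_big_cons (J : Type) (i : J) (s : seq J) (P : pred J) (F : J -> R -> R) :
  (fun t => \sum_(j <- i :: s | P j) F j t) =
  if P i then (fun t => F i t + \sum_(j <- s | P j) F j t)
  else (fun t => \sum_(j <- s | P j) F j t).
Proof. by apply/funext => t; rewrite big_cons; case: ifP. Qed.

Lemma inL2_sum (J : Type) (s : seq J) (P : pred J) (F : J -> R -> R) :
  (forall i, P i -> L (F i)) -> L (fun t => \sum_(i <- s | P i) F i t).
Proof.
move=> LF; elim: s => [|i s IH].
  by rewrite fun_big_nil; exact: inL2_0.
rewrite fun_big_cons; case: ifP => [/LF Li|_] //; exact: inL2D.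
Qed.

Lemma ipC x y : ip x y = ip y x.
Proof. by apply: eq_Rintegral => t _; rewrite mulrC. Qed.

Lemma ip0l z : ip (fun _ => 0) z = 0.
Proof.
rewrite /ip (eq_Rintegral mu (g := fun _ => 0)); last by move=> t _; rewrite mul0r.
by rewrite Rintegral_cst ?mul0r //; exact: measurable_I01.
Qed.

Lemma ipDl x y z : L x -> L y -> L z ->
  ip (fun t => x t + y t) z = ip x z + ip y z.
Proof.
move=> Lx Ly Lz; rewrite /ip.
rewrite (eq_Rintegral mu (g := fun t => x t * z t + y t * z t)); last first.
  by move=> t _; rewrite mulrDl.
by rewrite (RintegralD _ (inL2_integrable_mul Lx Lz) (inL2_integrable_mul Ly Lz))
  //; exact: measurable_I01.
Qed.

Lemma ipZl k x z : L x -> L z -> ip (fun t => k * x t) z = k * ip x z.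
Proof.
move=> Lx Lz; rewrite /ip.
rewrite (eq_Rintegral mu (g := fun t => k * (x t * z t))); last first.
  by move=> t _; rewrite mulrA.
by rewrite (RintegralZl _ _ (inL2_integrable_mul Lx Lz)) //; exact: measurable_I01.
Qed.

Lemma ipBl x y z : L x -> L y -> L z ->
  ip (fun t => x t - y t) z = ip x z - ip y z.
Proof.
move=> Lx Ly Lz; have -> : (fun t => x t - y t) = (fun t => x t + (-1) * y t).
  by apply/funext => t; rewrite mulN1r.
by rewrite ipDl ?ipZl ?mulN1r //; exact: inL2Z.
Qed.

Lemma ip_suml (J : Type) (s : seq J) (P : pred J) (F : J -> R -> R) z :
  (forall i, P i -> L (F i)) -> L z ->
  ip (fun t => \sum_(i <- s | P i) F i t) z = \sum_(i <- s | P i) ip (F i) z.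
Proof.
move=> LF Lz; elim: s => [|i s IH].
  by rewrite fun_big_nil ip0l big_nil.
rewrite fun_big_cons big_cons; case: ifP => [/LF Li|_] //.
by rewrite ipDl ?IH //; exact: inL2_sum.
Qed.

Lemma ip_ge0 x : 0 <= ip x x.
Proof. by apply: Rintegral_ge0 => t _; rewrite -expr2 sqr_ge0. Qed.

(* A null function (||h|| = 0) is orthogonal to everything: expand
   0 <= ||h + t g||^2 = 2t<h,g> + t^2||g||^2 at t = -<h,g>/(||g||^2+1). *)
Lemma ip_null {h g} : L h -> L g -> ip h h = 0 -> ip h g = 0.
Proof.
move=> Lh Lg h0.
have expand t : ip (fun s => h s + t * g s) (fun s => h s + t * g s) =
    2 * t * ip h g + t ^+ 2 * ip g g.
  have Ltg := inL2Z t Lg; have Lw := inL2D Lh Ltg.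
  rewrite ipDl // ipZl // [ip h _]ipC [ip g _]ipC !ipDl // !ipZl //.
  by rewrite h0 [ip g h]ipC; ring.
set a := ip h g; set b := ip g g.
have b0 : 0 <= b := ip_ge0 g.
set t := - a / (b + 1).
have ht : a = - (t * (b + 1)) by rewrite /t mulfVK ?opprK // gt_eqF // ltr_wpDl.
have := ip_ge0 (fun s => h s + t * g s); rewrite expand -/a -/b ht => H.
have t2 : t ^+ 2 <= 0 by have := sqr_ge0 t; rewrite !expr2 in H *; nra.
have /eqP : t ^+ 2 = 0 by apply/le_anti; rewrite t2 sqr_ge0.
by rewrite expf_eq0 /= => /eqP ->; rewrite mul0r oppr0.
Qed.

Lemma proj_resid_orth (k : nat) (e : nat -> R -> R) x i :
  L x -> (forall j, (j < k)%N -> L (e j)) ->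
  (forall j j', (j < k)%N -> (j' < k)%N ->
     ip (e j) (e j') = if j == j' then 1 else 0) ->
  (i < k)%N ->
  ip (fun t => x t - \sum_(j < k) ip x (e j) * e j t) (e i) = 0.
Proof.
move=> Lx Le orth ik.
have Lei : L (e i) := Le i ik.
have LeZ (j : 'I_k) a : L (fun t => a * e j t) by apply/inL2Z/Le.
rewrite ipBl ?ip_suml //; last exact: inL2_sum.
rewrite (eq_bigr (fun j : 'I_k => if j == i :> nat then ip x (e j) else 0)).
  by rewrite -big_mkcond (big_ord1_eq _ (fun j => ip x (e j))) ik subrr.
move=> j _; have Lej := Le j (ltn_ord j); rewrite ipZl ?orth ?ltn_ord //.
by case: eqP; rewrite ?mulr1 ?mulr0.
Qed.

Lemma eigenfun_orth {op : (R -> R) -> R -> R} {psi} {lam : R} {g} :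
  L (op psi) -> L psi -> L g -> lam != 0 ->
  L2eq (op psi) (fun t => lam * psi t) -> ip (op psi) g = 0 -> ip psi g = 0.
Proof.
move=> Lop Lpsi Lg lam0 eig range0.
have := ip_null (inL2B Lop (inL2Z lam Lpsi)) Lg eig.
rewrite ipBl ?ipZl ?range0 ?sub0r //; last exact: inL2Z.
by move/eqP; rewrite oppr_eq0 mulf_eq0 (negbTE lam0) => /eqP.
Qed.

End InnerProduct.

Section Layers.
Variables (R : realType) (G : nat) (N : 'I_G -> nat).
Variable X : forall v : 'I_G, 'I_(N v) -> R -> R.
Variables (D : nat) (c : nat -> 'I_G -> nat) (f : nat -> 'I_G -> R).
Variable phi : nat -> nat -> R -> R.

Hypothesis X_L2 : forall v n, inL2 (X v n).
Hypothesis nested : forall d v w, (2 <= d <= D)%N -> c d v = c d w ->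
  c d.-1 v = c d.-1 w.
Hypothesis top_eig : forall d v, (1 <= d <= D)%N ->
  top_eigfun (commOp X c phi f d (c d v)) (phi d (c d v)).

Definition chain (u : 'I_G) (j : nat) : R -> R := phi j.+1 (c j.+1 u).

Lemma community_nested d j v w : (1 <= j <= d)%N -> (d <= D)%N ->
  c d v = c d w -> c j v = c j w.
Proof.
elim: d => [|d IH] /andP[j1 jd] dD cvw; first by lia.
have [->//|jd'] := eqVneq j d.+1.
by apply: IH; [lia | lia | apply: (nested d.+1) => //; lia].
Qed.

Lemma chain_top_eig k u : (k < D)%N ->
  top_eigfun (commOp X c phi f k.+1 (c k.+1 u)) (chain u k).
Proof. by move=> kD; apply: top_eig; lia. Qed.

Lemma chain_L2 u j : (j < D)%N -> inL2 (chain u j).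
Proof. by move=> jD; have [] := chain_top_eig j u jD. Qed.

Lemma resid_L2 {k w} (n : 'I_(N w)) : (k <= D)%N -> inL2 (resid X c phi k n).
Proof.
move=> kD; apply: inL2B => //; apply: inL2_sum => j _; apply/inL2Z/chain_L2.
by have := ltn_ord j; lia.
Qed.

Lemma Gam_L2 k w h : (k <= D)%N -> inL2 (Gam X c phi k w h).
Proof.
by move=> kD; apply/inL2Z/inL2_sum => n _; apply/inL2Z/resid_L2.
Qed.

Lemma resid_in_community {k w} (n : 'I_(N w)) {u} : (k < D)%N ->
  c k.+1 w = c k.+1 u ->
  resid X c phi k n =
  (fun t => X w n t - \sum_(j < k) ip (X w n) (chain u j) * chain u j t).
Proof.
move=> kD cwu; apply/funext => t; congr (_ - _); apply: eq_bigr => j _.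
have jk := ltn_ord j.
by rewrite /chain (@community_nested k.+1 j.+1 w u) //; lia.
Qed.

(* The community operator of layer d maps into the span of the residuals of
   layer d-1 of its members, so its range is orthogonal to whatever all
   these residuals are orthogonal to. *)
Lemma commOp_orth d i h g : (1 <= d <= D)%N -> inL2 g ->
  (forall w (n : 'I_(N w)), c d w = i -> ip (resid X c phi d.-1 n) g = 0) ->
  ip (commOp X c phi f d i h) g = 0.
Proof.
move=> dD Lg resid_orth.
have dD' : (d.-1 <= D)%N by lia.
rewrite /commOp ip_suml //; last by move=> w _; exact/inL2Z/Gam_L2.
apply: big1 => w /eqP cwi; rewrite ipZl //; last exact: Gam_L2.
rewrite /Gam ipZl //; last by apply/inL2_sum => n _; apply/inL2Z/resid_L2.
rewrite ip_suml //; last by move=> n _; apply/inL2Z/resid_L2.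
rewrite big1 ?mulr0 // => n _.
have Lr := resid_L2 n dD'.
by rewrite ipZl // resid_orth // mulr0.
Qed.

Lemma new_layer_orth k u j : (k < D)%N ->
  (forall w j j', (j < k)%N -> (j' < k)%N ->
     ip (chain w j) (chain w j') = if j == j' then 1 else 0) ->
  (j < k)%N -> ip (chain u j) (chain u k) = 0.
Proof.
move=> kD orth jk.
have [Lpsi [_ [lam [lam0 [eig _]]]]] := chain_top_eig k u kD.
have Lj : inL2 (chain u j) by apply: chain_L2; lia.
rewrite ipC; apply: (eigenfun_orth _ Lpsi Lj (lt0r_neq0 lam0) eig).
  by apply: inL2_sum => w _; exact/inL2Z/Gam_L2/ltnW.
apply: commOp_orth => // w n cwu.
rewrite (resid_in_community n kD cwu).
apply: proj_resid_orth => //; last exact: orth.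
by move=> i ik; apply: chain_L2; lia.
Qed.

Lemma chain_orthonormal k : (k <= D)%N -> forall u j j', (j < k)%N -> (j' < k)%N ->
  ip (chain u j) (chain u j') = if j == j' then 1 else 0.
Proof.
elim: k => [|k IH] kD u j j' jk j'k; first by [].
have orth := IH (ltnW kD).
have [jk1|jk1] := ltnP j k; have [j'k1|j'k1] := ltnP j' k.
- exact: orth.
- have -> : j' = k by lia.
  by rewrite new_layer_orth // ifF //; apply/eqP; lia.
- have -> : j = k by lia.
  by rewrite ipC new_layer_orth // ifF //; apply/eqP; lia.
- have -> : j = k by lia.
  have -> : j' = k by lia.
  by rewrite eqxx; have [_ []] := chain_top_eig k u kD.
Qed.

End Layers.

Theorem proposition2 (R : realType) (G : nat) (N : 'I_G -> nat)
  (X : forall v : 'I_G, 'I_(N v) -> R -> R)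
  (D : nat) (c : nat -> 'I_G -> nat) (f : nat -> 'I_G -> R)
  (phi : nat -> nat -> R -> R) :
  (0 < G)%N ->
  (forall v, 0 < N v)%N ->
  (forall v n, inL2 (X v n)) ->
  (0 < D)%N ->
  (* nested partitions: every community of layer d lies in one of layer d-1 *)
  (forall d v w, (2 <= d <= D)%N -> c d v = c d w -> c d.-1 v = c d.-1 w) ->
  (forall d v, (1 <= d <= D)%N -> 0 < f d.-1 v) ->
  (forall d v, (1 <= d <= D)%N ->
     top_eigfun (commOp X c phi f d (c d v)) (phi d (c d v))) ->
  forall v d d', (1 <= d <= D)%N -> (1 <= d' <= D)%N ->
    ip (phi d (c d v)) (phi d' (c d' v)) = (if d == d' then 1 else 0).
Proof.
move=> _ _ X_L2 _ nested _ top_eig v [|d] [|d'] // dD d'D.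
have dD1 : (d < D)%N by lia.
have d'D1 : (d' < D)%N by lia.
rewrite eqSS; exact: (@chain_orthonormal R G N X D c f phi X_L2 nested top_eig
  D (leqnn D) v d d' dD1 d'D1).
Qed.
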